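(* Let $n\ge3$ and $c\ge1$. For every $t\in\{1,\dots,c\}$ and every $i\in\{1,\dots,n-2\}$, neither of the relations \[ \rho_i\sigma_{i+1,t}\sigma_{i,t}=\sigma_{i+1,t}\sigma_{i,t}\rho_{i+1},\qquad \rho_{i+1}\sigma_{i,t}\sigma_{i+1,t}=\sigma_{i,t}\sigma_{i+1,t}\rho_i \] holds in $UV_n(c)$; that is, imposing either relation yields a proper quotient of $UV_n(c)$.
   Context: $UV_n(c)$ is the group with generators $\rho_i$ ($1\le i\le n-1$), $\sigma_{i,t}$ ($1\le i\le n-1$, $1\le t\le c$) and relations $\rho_i\rho_{i+1}\rho_i=\rho_{i+1}\rho_i\rho_{i+1}$ ($1\le i\le n-2$), $\rho_i\rho_j=\rho_j\rho_i$ ($|i-j|\ge2$), $\rho_i^2=1$, $\sigma_{i,t}\sigma_{j,\ell}=\sigma_{j,\ell}\sigma_{i,t}$ ($|i-j|\ge2$, $1\le t,\ell\le c$), $\sigma_{i,t}\rho_j=\rho_j\sigma_{i,t}$ ($|i-j|\ge2$), $\rho_i\rho_{i+1}\sigma_{i,t}=\sigma_{i+1,t}\rho_i\rho_{i+1}$ ($1\le i\le n-2$, $1\le t\le c$). *)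

(* Finitely presented groups are not in the library,
   so we define a group presentation honestly: words in the generators with
   formal 1, product and inverse, and the congruence generated by the group
   axioms and the defining relations. *)
From mathcomp Require Import all_boot.
Set Implicit Arguments. Unset Strict Implicit. Unset Printing Implicit Defensive.

Inductive word (X : Type) : Type :=
  | W1 : word X
  | Wg : X -> word X
  | Wm : word X -> word X -> word X
  | Wi : word X -> word X.
Arguments W1 {X}.

Inductive pres_eq (X : Type) (R : word X -> word X -> Prop) :
    word X -> word X -> Prop :=
  | pe_rel u v : R u v -> pres_eq R u v
  | pe_refl u : pres_eq R u u
  | pe_sym u v : pres_eq R u v -> pres_eq R v u
  | pe_trans u v w : pres_eq R u v -> pres_eq R v w -> pres_eq R u w
  | pe_mul u u' v v' : pres_eq R u u' -> pres_eq R v v' ->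
      pres_eq R (Wm u v) (Wm u' v')
  | pe_inv u u' : pres_eq R u u' -> pres_eq R (Wi u) (Wi u')
  | pe_assoc u v w : pres_eq R (Wm (Wm u v) w) (Wm u (Wm v w))
  | pe_mul1l u : pres_eq R (Wm W1 u) u
  | pe_mul1r u : pres_eq R (Wm u W1) u
  | pe_mulVl u : pres_eq R (Wm (Wi u) u) W1.

(* Generators of UV_n(c): rho_i (1 <= i <= n-1), sigma_{i,t} (1 <= i <= n-1,
   1 <= t <= c), 1-based indexing as in the paper. *)
Inductive uvlabel : Type := LRho of nat | LSig of nat & nat.

Definition uv_valid (n c : nat) (g : uvlabel) : bool :=
  match g with
  | LRho i => (1 <= i) && (i <= n.-1)
  | LSig i t => [&& 1 <= i, i <= n.-1, 1 <= t & t <= c]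
  end.

Definition uvgen (n c : nat) := {g : uvlabel | uv_valid n c g}.

Definition uvw (n c : nat) := word (uvgen n c).

(* Generator words; an out-of-range label gives the trivial word (only ever
   used with in-range indices below). *)
Definition gw (n c : nat) (g : uvlabel) : uvw n c :=
  match @insub _ (uv_valid n c) (uvgen n c) g with
  | Some x => Wg x
  | None => W1
  end.

Definition rho (n c i : nat) : uvw n c := gw n c (LRho i).
Definition sigma (n c i t : nat) : uvw n c := gw n c (LSig i t).

Definition far (i j : nat) : bool := (i + 2 <= j) || (j + 2 <= i).

Inductive uv_rel (n c : nat) : uvw n c -> uvw n c -> Prop :=
  | r_braid i : 1 <= i -> i <= n - 2 ->
      uv_rel (Wm (Wm (rho n c i) (rho n c i.+1)) (rho n c i))
             (Wm (Wm (rho n c i.+1) (rho n c i)) (rho n c i.+1))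
  | r_rcomm i j : 1 <= i <= n.-1 -> 1 <= j <= n.-1 -> far i j ->
      uv_rel (Wm (rho n c i) (rho n c j)) (Wm (rho n c j) (rho n c i))
  | r_rinv i : 1 <= i <= n.-1 ->
      uv_rel (Wm (rho n c i) (rho n c i)) W1
  | r_scomm i j t l : 1 <= i <= n.-1 -> 1 <= j <= n.-1 -> far i j ->
      1 <= t <= c -> 1 <= l <= c ->
      uv_rel (Wm (sigma n c i t) (sigma n c j l))
             (Wm (sigma n c j l) (sigma n c i t))
  | r_srcomm i j t : 1 <= i <= n.-1 -> 1 <= j <= n.-1 -> far i j ->
      1 <= t <= c ->
      uv_rel (Wm (sigma n c i t) (rho n c j)) (Wm (rho n c j) (sigma n c i t))
  | r_mixed i t : 1 <= i -> i <= n - 2 -> 1 <= t <= c ->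
      uv_rel (Wm (Wm (rho n c i) (rho n c i.+1)) (sigma n c i t))
             (Wm (sigma n c i.+1 t) (Wm (rho n c i) (rho n c i.+1))).

Definition uv_eq (n c : nat) : uvw n c -> uvw n c -> Prop := pres_eq (@uv_rel n c).

(** Send [rho_i] to the transposition of the strands [i] and [i+1] and every
    [sigma_{i,t}] to the identity.  All defining relations of [UV_n(c)] hold in
    the symmetric group: the [rho]-relations are the Coxeter relations of the
    transpositions, and every relation involving a [sigma] collapses to a
    trivial identity.  Under this representation both proposed relations read
    [s_i = s_{i+1}], which fails on strand [i]. *)
From mathcomp Require Import all_boot all_fingroup.
From mathcomp Require Import zify.
Set Implicit Arguments. Unset Strict Implicit. Unset Printing Implicit Defensive.

Section WordEval.
Local Open Scope group_scope.
Variables (X : Type) (G : groupType) (f : X -> G).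

Fixpoint eval_word (u : word X) : G :=
  match u with
  | W1 => 1
  | Wg x => f x
  | Wm u v => eval_word u * eval_word v
  | Wi u => (eval_word u)^-1
  end.

Lemma pres_eq_eval (R : word X -> word X -> Prop) :
    (forall u v, R u v -> eval_word u = eval_word v) ->
  forall u v, pres_eq R u v -> eval_word u = eval_word v.
Proof.
move=> Rf u v; elim=> {u v} /=.
- exact: Rf.
- by [].
- by move=> u v _ ->.
- by move=> u v w _ -> _ ->.
- by move=> u u' v v' _ -> _ ->.
- by move=> u u' _ ->.
- by move=> u v w; rewrite mulgA.
- by move=> u; rewrite mul1g.
- by move=> u; rewrite mulg1.
- by move=> u; rewrite mulVg.
Qed.

End WordEval.

Section Transpositions.
Local Open Scope group_scope.
Variable T : finType.
Implicit Types x y z w : T.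

Lemma tperm_braid x y z : x != y -> y != z -> x != z ->
  tperm x y * tperm y z * tperm x y = tperm y z * tperm x y * tperm y z.
Proof.
move=> nxy nyz nxz.
have conj_tperm a b (s : {perm T}) : tperm a b * s * tperm a b = s ^ tperm a b.
  by rewrite conjgE tpermV mulgA.
by rewrite !{}conj_tperm !tpermJ tpermR tpermL !tpermD // eq_sym.
Qed.

Lemma tperm_commute x y z w : x != z -> x != w -> y != z -> y != w ->
  commute (tperm x y) (tperm z w).
Proof.
move=> nxz nxw nyz nyw; apply/commgP/conjg_fixP.
by rewrite tpermJ !tpermD // eq_sym.
Qed.

End Transpositions.

Section StrandPermutation.
Local Open Scope group_scope.
Variables n c : nat.

(* Strands are numbered [1..n] inside ['I_n.+1]; the point [0] stays fixed. *)
Definition strand_swap (i : nat) : {perm 'I_n.+1} := tperm (inord i) (inord i.+1).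

Definition uv_perm (g : uvgen n c) : {perm 'I_n.+1} :=
  if val g is LRho i then strand_swap i else 1.

Lemma eval_rho i : 1 <= i <= n.-1 -> eval_word uv_perm (rho n c i) = strand_swap i.
Proof.
move=> vi; rewrite /rho /gw; case: insubP => [g _ g_rho | /negP //] /=.
by rewrite /uv_perm g_rho.
Qed.

Lemma eval_sigma i t : eval_word uv_perm (sigma n c i t) = 1.
Proof. by rewrite /sigma /gw; case: insubP => [g _ g_sig|] //=; rewrite /uv_perm g_sig. Qed.

Lemma inord_neq i j : i <= n -> j <= n -> i != j -> inord i != inord j :> 'I_n.+1.
Proof. by move=> le_in le_jn; rewrite -(inj_eq val_inj) /= !inordK. Qed.

Lemma uv_rel_perm (u v : uvw n c) :
  uv_rel u v -> eval_word uv_perm u = eval_word uv_perm v.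
Proof.
case=> {u v} /=.
- move=> i i_gt0 i_le; rewrite !eval_rho; try lia.
  by apply: tperm_braid; apply: inord_neq; lia.
- move=> i j vi vj far_ij; rewrite !eval_rho //.
  by apply: tperm_commute; apply: inord_neq; move: far_ij; rewrite /far; lia.
- by move=> i vi; rewrite eval_rho // tperm2.
- by move=> *; rewrite !eval_sigma.
- by move=> *; rewrite eval_sigma mul1g mulg1.
- move=> i t i_gt0 i_le _; rewrite !eval_rho ?eval_sigma ?mulg1 ?mul1g //; lia.
Qed.

Lemma uv_eq_perm (u v : uvw n c) :
  uv_eq u v -> eval_word uv_perm u = eval_word uv_perm v.
Proof. exact/pres_eq_eval/uv_rel_perm. Qed.

Lemma strand_swap_succ_neq i : i.+2 <= n -> strand_swap i != strand_swap i.+1.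
Proof.
move=> le_i2n; apply/eqP => /permP/(_ (inord i.+1)).
rewrite /strand_swap tpermR tpermL => /eqP; apply/negP.
by apply: inord_neq; lia.
Qed.

End StrandPermutation.

Theorem proposition5p1 (n c : nat) :
  3 <= n -> 1 <= c ->
  forall t i : nat, 1 <= t <= c -> 1 <= i <= n - 2 ->
    ~ uv_eq (Wm (Wm (rho n c i) (sigma n c i.+1 t)) (sigma n c i t))
            (Wm (Wm (sigma n c i.+1 t) (sigma n c i t)) (rho n c i.+1))
    /\
    ~ uv_eq (Wm (Wm (rho n c i.+1) (sigma n c i t)) (sigma n c i.+1 t))
            (Wm (Wm (sigma n c i t) (sigma n c i.+1 t)) (rho n c i)).
Proof.
move=> _ _ t i _ vi.
have /eqP swaps_neq : strand_swap n i != strand_swap n i.+1.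
  by apply: strand_swap_succ_neq; lia.
split=> /uv_eq_perm /=; rewrite !eval_sigma !eval_rho ?mulg1 ?mul1g; try lia.
- exact: swaps_neq.
- by move/esym/swaps_neq.
Qed.
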